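(* For $i=1,\dots,6$ let $G_i$ be the simple graph on vertex set $\{1,\dots,7\}$ whose edges are the $5$-cycle edges $12,23,34,45,51$, the edge $67$, and additionally: $G_1$: $61,62,74$; $G_2$: $61,63,72$; $G_3$: $61,63,74$; $G_4$: $61,63,72,74$; $G_5$: $61,72$; $G_6$: $61,73$. Then $H(G_1)=11/3$ and $H(G_2)=H(G_3)=H(G_4)=H(G_5)=H(G_6)=7/2$.
   Context: For an integer $q \ge 2$ let $[q]=\{0,\dots,q-1\}$. For $f=(f_1,\dots,f_n):[q]^n\to[q]^n$, the interaction graph $\mathrm{IG}(f)$ is the digraph on $\{1,\dots,n\}$ with an arc $(u,v)$ iff $f_v$ depends essentially on $x_u$ (there exist $a,b\in[q]^n$ differing only in coordinate $u$ with $f_v(a)\ne f_v(b)$). A simple graph is viewed as the digraph with both arcs for each edge and no loops. The $q$-guessing number is $\mathrm{gn}(G,q)=\max\{\log_q|\mathrm{Fix}(f)| : \mathrm{IG}(f)\subseteq G\}$ and the entropy is $H(G)=\sup_{q\ge2}\mathrm{gn}(G,q)$. *)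

From Stdlib Require Import Reals.
From mathcomp Require Import all_boot.

Set Implicit Arguments.
Unset Strict Implicit.
Unset Printing Implicit Defensive.

Definition config (q n : nat) : finType := {ffun 'I_n -> 'I_q}.

Definition qmap (q n : nat) : finType := {ffun config q n -> config q n}.

Definition depends (q n : nat) (f : qmap q n) (u v : 'I_n) : bool :=
  [exists a : config q n, exists b : config q n,
     [forall w : 'I_n, (w != u) ==> (a w == b w)] && (f a v != f b v)].

Definition IG_sub (q n : nat) (G : rel 'I_n) (f : qmap q n) : bool :=
  [forall u : 'I_n, forall v : 'I_n, depends f u v ==> G u v].

Definition Fix (q n : nat) (f : qmap q n) : {set config q n} :=
  [set x | f x == x].

(* All candidate values are >= 0 and a constant map (IG empty, exactly one
   fixed point) gives 0, so the maximum with default 0 is the true max. *)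
Definition gn (n : nat) (G : rel 'I_n) (q : nat) : R :=
  \big[Rmax/R0]_(f : qmap q n | IG_sub G f)
     (Rdiv (ln (INR #|Fix f|)) (ln (INR q))).

Definition entropy_is (n : nat) (G : rel 'I_n) (h : R) : Prop :=
  is_lub (fun r => exists q : nat, (2 <= q)%N /\ r = gn G q) h.

(* Simple graph on vertex set {1,..,n} given by an edge list with labels in
   {1,..,n}, viewed as a symmetric digraph on 'I_n (vertex k <-> index k-1). *)
Definition graph_of (n : nat) (E : seq (nat * nat)) : rel 'I_n :=
  fun u v => ((u.+1, v.+1) \in E) || ((v.+1, u.+1) \in E).

Definition base_edges : seq (nat * nat) :=
  [:: (1,2); (2,3); (3,4); (4,5); (5,1); (6,7)].

Definition G1 : rel 'I_7 := graph_of (base_edges ++ [:: (6,1); (6,2); (7,4)]).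
Definition G2 : rel 'I_7 := graph_of (base_edges ++ [:: (6,1); (6,3); (7,2)]).
Definition G3 : rel 'I_7 := graph_of (base_edges ++ [:: (6,1); (6,3); (7,4)]).
Definition G4 : rel 'I_7 :=
  graph_of (base_edges ++ [:: (6,1); (6,3); (7,2); (7,4)]).
Definition G5 : rel 'I_7 := graph_of (base_edges ++ [:: (6,1); (7,2)]).
Definition G6 : rel 'I_7 := graph_of (base_edges ++ [:: (6,1); (7,3)]).

From Stdlib Require Import Reals Lra.
From mathcomp Require Import all_boot zmodp Rstruct.

Set Implicit Arguments.
Unset Strict Implicit.
Unset Printing Implicit Defensive.

(* Let f satisfy IG(f) <= G and let x be uniformly distributed
   on Fix f; write h(A) for the entropy of the coordinates x_A.  Then
   h(V) = ln |Fix f|, each coordinate takes at most q values, so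
   h({v}) <= ln q, and x_v = f_v(x) is a function of the in-neighbours N(v),
   so h(N(v) + v) = h(N(v)).  Together with the Shannon inequalities
   (nonnegativity and submodularity) these linear constraints already force
   h(V) <= c ln q; the instances of submodularity needed, found by linear
   programming, are listed below and linear arithmetic combines everything.  For q = 2^a, explicit maps built from local rules have
   2^k fixed points, so gn(G, 2^a) >= k / a = c. *)

Open Scope R_scope.

(** * Entropy of the uniform distribution on a set of configurations *)

Lemma ln_le_sub1 z : 0 < z -> ln z <= z - 1.
Proof. by move=> z_gt0; have := exp_ineq1_le (ln z); rewrite exp_ln //; lra. Qed.

Lemma ln_le x y : 0 < x -> x <= y -> ln x <= ln y.
Proof. by move=> x_gt0 [/(ln_increasing _ _ x_gt0)/Rlt_le | ->] //; lra. Qed.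

Lemma ln_div x y : 0 < x -> 0 < y -> ln (x / y) = ln x - ln y.
Proof.
by move=> x_gt0 y_gt0; rewrite ln_mult ?ln_Rinv //; apply: Rinv_0_lt_compat.
Qed.

Lemma INR_gt0 k : (0 < k)%N -> 0 < INR k.
Proof. by move=> /ltP; apply: lt_0_INR. Qed.

Lemma rsum_le (I : finType) (P : pred I) (F G : I -> R) :
  (forall i, P i -> F i <= G i) ->
  \big[Rplus/0]_(i | P i) F i <= \big[Rplus/0]_(i | P i) G i.
Proof. by move=> FG; apply: (big_ind2 Rle) => //; [lra | move=> *; lra]. Qed.

Lemma rsum_const (I : finType) (P : pred I) c :
  \big[Rplus/0]_(i | P i) c = INR #|P| * c.
Proof.
by rewrite big_const; elim: #|P| => [|k IH]; rewrite ?iterS ?IH ?S_INR /=; lra.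
Qed.

Lemma rsum_const_set (I : finType) (A : {set I}) c :
  \big[Rplus/0]_(i in A) c = INR #|A| * c.
Proof. by rewrite rsum_const; congr (INR _ * _); apply: eq_card. Qed.

Lemma rsum_ln_le0 (I : finType) (A : {set I}) (z : I -> R) :
  (forall i, i \in A -> 0 < z i) -> \big[Rplus/0]_(i in A) z i <= INR #|A| ->
  \big[Rplus/0]_(i in A) ln (z i) <= 0.
Proof.
move=> z_gt0 sum_z.
have := rsum_le (fun i Ai => ln_le_sub1 (z_gt0 i Ai)).
by rewrite big_split /= rsum_const_set; lra.
Qed.

Section FiberEntropy.
Variables (q n : nat) (S : {set config q n}).
Implicit Types (A B : {set 'I_n}) (s t : config q n).

Let N := INR #|S|.

Definition agree (A : {set 'I_n}) (s t : config q n) : bool :=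
  [forall i in A, s i == t i].

Lemma agreeP A s t : reflect {in A, forall i, s i = t i} (agree A s t).
Proof.
by apply: (iffP forall_inP) => st i /st; [move/eqP | move=> ->].
Qed.

Lemma agree_refl A : reflexive (agree A).
Proof. by move=> s; apply/agreeP. Qed.

Lemma agree_sym A : symmetric (agree A).
Proof. by move=> s t; apply/agreeP/agreeP=> st i /st. Qed.

Lemma agree_trans A s t u : agree A s t -> agree A t u -> agree A s u.
Proof. by move=> /agreeP st /agreeP tu; apply/agreeP=> i Ai; rewrite st ?tu. Qed.

Lemma agree_sub A B s t : A \subset B -> agree B s t -> agree A s t.
Proof. by move=> /subsetP AB /agreeP st; apply/agreeP=> i /AB /st. Qed.

Lemma agree_setU A B s t : agree (A :|: B) s t = agree A s t && agree B s t.
Proof.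
apply/agreeP/andP=> [st | [/agreeP sA /agreeP sB] i].
  by split; apply/agreeP=> i Ai; apply: st; rewrite inE Ai ?orbT.
by rewrite inE => /orP[/sA | /sB].
Qed.

Lemma agree_set1 v s t : agree [set v] s t = (s v == t v).
Proof.
by apply/agreeP/eqP=> [-> // | st i]; rewrite ?inE // => /eqP ->.
Qed.

Definition fiber A s : {set config q n} := [set t in S | agree A s t].

Lemma fiber_eq A s s' : agree A s s' -> fiber A s = fiber A s'.
Proof.
move=> ss'; apply/setP=> t; rewrite !inE; case: (t \in S) => //=.
by apply/idP/idP; apply: agree_trans; rewrite // agree_sym.
Qed.

Lemma card_fiber_gt0 A s : s \in S -> (0 < #|fiber A s|)%N.
Proof. by move=> sS; apply/card_gt0P; exists s; rewrite inE sS agree_refl. Qed.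

Let nfib A s := INR #|fiber A s|.

Lemma nfib_gt0 A s : s \in S -> 0 < nfib A s.
Proof. by move=> sS; apply/INR_gt0/card_fiber_gt0. Qed.

Lemma rsum_fiber A s c :
  \big[Rplus/0]_(t in S) (if agree A s t then c else 0) = nfib A s * c.
Proof.
rewrite -big_mkcondr rsum_const; congr (INR _ * c).
by apply: eq_card=> t; rewrite !inE.
Qed.

Lemma rsum_inv_fiber_le A (P : pred (config q n)) :
  (forall s, s \in S -> P s -> [set t in S | P t] = fiber A s) ->
  \big[Rplus/0]_(s in S | P s) / nfib A s <= 1.
Proof.
move=> Pfib.
have [s0 /andP[s0S Ps0] | noP] := pickP (fun s => (s \in S) && P s); last first.
  by rewrite big_pred0 //; lra.
have fib_s0 s : (s \in S) && P s -> fiber A s = fiber A s0.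
  by case/andP=> sS Ps; rewrite -(Pfib s) // (Pfib s0).
rewrite (eq_bigr (fun=> / nfib A s0)) => [|s /fib_s0]; last by rewrite /nfib => ->.
rewrite rsum_const -/(nfib A s0) (_ : INR _ = nfib A s0).
  by rewrite Rinv_r; [lra | have := nfib_gt0 A s0S; lra].
by congr INR; rewrite -(Pfib s0) //; apply: eq_card=> t; rewrite inE.
Qed.

Lemma rsum_pair_fiber_le A B a b : a \in S ->
  \big[Rplus/0]_(s in S) (if agree A s a && agree B s b then
                            / (nfib (A :|: B) s * nfib (A :&: B) s) else 0)
  <= if agree (A :&: B) a b then / nfib (A :&: B) a else 0.
Proof.
move=> aS; have DA : A :&: B \subset A by apply: subsetIl.
have DB : A :&: B \subset B by apply: subsetIr.
have rhs_ge0 : 0 <= if agree (A :&: B) a b then / nfib (A :&: B) a else 0.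
  by case: ifP => _; [apply/Rlt_le/Rinv_0_lt_compat/nfib_gt0 | lra].
have [s0 /andP[s0S /andP[s0a s0b]] | none] :=
  pickP (fun s => (s \in S) && (agree A s a && agree B s b)); last first.
  by rewrite big1 // => s sS; have := none s; rewrite sS => /= ->.
have ab : agree (A :&: B) a b.
  by apply: agree_trans (agree_sub DB s0b); rewrite agree_sym (agree_sub DA s0a).
rewrite ab -big_mkcondr /=.
rewrite (eq_bigr (fun s => / nfib (A :|: B) s * / nfib (A :&: B) a)); last first.
  move=> s /andP[sS /andP[sa _]].
  rewrite Rinv_mult /nfib (fiber_eq (agree_sub DA sa)) //.
rewrite -big_distrl /= -[X in _ <= X]Rmult_1_l.
apply: Rmult_le_compat_r; first by apply/Rlt_le/Rinv_0_lt_compat/nfib_gt0.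
apply: rsum_inv_fiber_le => s sS /andP[sa sb]; apply/setP=> t; rewrite !inE.
case: (t \in S) => //=; rewrite agree_setU.
apply/andP/andP=> [[ta tb] | [st1 st2]]; split.
- by apply: agree_trans sa _; rewrite agree_sym.
- by apply: agree_trans sb _; rewrite agree_sym.
- by apply: agree_trans _ sa; rewrite agree_sym.
- by apply: agree_trans _ sb; rewrite agree_sym.
Qed.

(* Double counting over pairs (a, b): the s that agree with a on A and with b
   on B form a single (A :|: B)-fiber, nonempty only if a and b agree on
   A :&: B. *)
Lemma rsum_fiber_ratio_le A B :
  \big[Rplus/0]_(s in S) (nfib A s * nfib B s /
                          (nfib (A :|: B) s * nfib (A :&: B) s)) <= N.
Proof.
pose w s := / (nfib (A :|: B) s * nfib (A :&: B) s).
have expand s : nfib A s * nfib B s * w s =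
    \big[Rplus/0]_(a in S) \big[Rplus/0]_(b in S)
       (if agree A s a && agree B s b then w s else 0).
  rewrite Rmult_assoc -rsum_fiber; apply: eq_bigr => a _.
  by case: (agree A s a); rewrite ?rsum_fiber ?big1.
rewrite (eq_bigr _ (fun s _ => expand s)) exchange_big /=.
apply: Rle_trans (_ : _ <= \big[Rplus/0]_(a in S) 1) _; last first.
  by rewrite rsum_const_set -/N Rmult_1_r; apply: Rle_refl.
apply: rsum_le => a aS; rewrite exchange_big /=.
rewrite -(Rinv_r (nfib (A :&: B) a)); last by have := nfib_gt0 (A :&: B) aS; lra.
rewrite -rsum_fiber; apply: rsum_le => b _; exact: rsum_pair_fiber_le.
Qed.

Lemma rsum_inv_fiber1_le v : \big[Rplus/0]_(s in S) / nfib [set v] s <= INR q.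
Proof.
rewrite (partition_big (fun s => s v) xpredT) //=.
apply: Rle_trans (_ : _ <= \big[Rplus/0]_(c : 'I_q) 1) _; last first.
  by rewrite rsum_const card_ord; lra.
apply: rsum_le => c _; apply: rsum_inv_fiber_le => s sS /eqP sv.
by apply/setP=> t; rewrite !inE agree_set1 sv eq_sym.
Qed.

Let lnfib A := \big[Rplus/0]_(s in S) ln (nfib A s).

(* The Shannon entropy, in nats, of the coordinates in A of a uniformly
   random element of S: the coordinates s_A occur with probability
   #|fiber A s| / #|S|. *)
Definition ent A : R := ln N - lnfib A / N.

Lemma lnfib_le_of_agree A B :
  (forall s t, s \in S -> t \in S -> agree B s t -> agree A s t) ->
  lnfib B <= lnfib A.
Proof.
move=> BA; apply: rsum_le => s sS; apply: ln_le; first exact: nfib_gt0.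
apply/le_INR/leP/subset_leq_card/subsetP=> t.
by rewrite !inE => /andP[tS st]; rewrite tS BA.
Qed.

Hypothesis S_gt0 : (0 < #|S|)%N.

Let N_gt0 : 0 < N. Proof. exact: INR_gt0. Qed.

Let ent_mulN A : N * ent A = N * ln N - lnfib A.
Proof. by rewrite /ent; field; apply: Rgt_not_eq. Qed.

Lemma ent_set0 : ent set0 = 0.
Proof.
rewrite /ent /lnfib (eq_bigr (fun=> ln N)) => [|s sS]; last first.
  congr (ln (INR _)); apply: eq_card => t.
  rewrite inE; case: (t \in S) => //=.
  by apply/forall_inP=> i; rewrite inE.
by rewrite rsum_const_set -/N; field; lra.
Qed.

Lemma ent_setT : ent setT = ln N.
Proof.
rewrite /ent /lnfib (eq_bigr (fun=> 0)) => [|s sS]; last first.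
  rewrite /nfib (_ : fiber _ s = [set s]) ?cards1 ?ln_1 //.
  apply/setP=> t; rewrite !inE; apply/andP/eqP=> [[_ /agreeP st] | ->].
    by apply/ffunP=> i; rewrite st ?inE.
  by rewrite sS agree_refl.
by rewrite rsum_const_set Rmult_0_r /Rdiv Rmult_0_l; lra.
Qed.

Lemma ent_le_of_agree A B :
  (forall s t, s \in S -> t \in S -> agree B s t -> agree A s t) ->
  ent A <= ent B.
Proof.
move=> /lnfib_le_of_agree BA.
apply: (Rmult_le_reg_l N); first exact: N_gt0.
by rewrite !ent_mulN; lra.
Qed.

Lemma ent_mono A B : A \subset B -> ent A <= ent B.
Proof. by move=> AB; apply: ent_le_of_agree => s t _ _; apply: agree_sub. Qed.

Lemma ent_ge0 A : 0 <= ent A.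
Proof. by rewrite -ent_set0; apply/ent_mono/sub0set. Qed.

Lemma ent_submod A B : ent (A :|: B) + ent (A :&: B) <= ent A + ent B.
Proof.
pose z s := nfib A s * nfib B s / (nfib (A :|: B) s * nfib (A :&: B) s).
have z_gt0 s : s \in S -> 0 < z s.
  move=> sS; have := nfib_gt0 A sS; have := nfib_gt0 B sS.
  have := nfib_gt0 (A :|: B) sS; have := nfib_gt0 (A :&: B) sS => *.
  by apply: Rdiv_lt_0_compat; apply: Rmult_lt_0_compat.
have ln_z : \big[Rplus/0]_(s in S) ln (z s) + lnfib (A :|: B) + lnfib (A :&: B)
            = lnfib A + lnfib B.
  rewrite /lnfib -!big_split; apply: eq_bigr => s sS /=.
  have := nfib_gt0 A sS; have := nfib_gt0 B sS.
  have := nfib_gt0 (A :|: B) sS; have := nfib_gt0 (A :&: B) sS => *.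
  rewrite /z ln_div ?ln_mult //; try lra; exact: Rmult_lt_0_compat.
have := rsum_ln_le0 z_gt0 (rsum_fiber_ratio_le A B) => sum_le.
apply: (Rmult_le_reg_l N); first exact: N_gt0.
by rewrite !(Rmult_plus_distr_l N (ent _)) !ent_mulN; lra.
Qed.

Lemma ent_set1_le v : ent [set v] <= ln (INR q).
Proof.
have [s0 s0S] : exists s, s \in S by apply/card_gt0P.
have q_gt0 : 0 < INR q by apply: INR_gt0; case: (s0 v) => k; apply: leq_ltn_trans.
pose z s := N / (INR q * nfib [set v] s).
have z_gt0 s : s \in S -> 0 < z s.
  move=> sS; have := nfib_gt0 [set v] sS => ?.
  by apply: Rdiv_lt_0_compat => //; apply: Rmult_lt_0_compat.
have sum_z : \big[Rplus/0]_(s in S) z s <= N.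
  rewrite (eq_bigr (fun s => N / INR q * / nfib [set v] s)) => [|s _]; last first.
    by rewrite /z /Rdiv Rinv_mult Rmult_assoc.
  rewrite -big_distrr /=.
  apply: Rle_trans (Rmult_le_compat_l _ _ _ _ (rsum_inv_fiber1_le v)) _.
    exact/Rlt_le/Rdiv_lt_0_compat.
  by apply: Req_le; field; lra.
have ln_z : \big[Rplus/0]_(s in S) ln (z s) + lnfib [set v] =
            N * (ln N - ln (INR q)).
  rewrite /lnfib -big_split /= (eq_bigr (fun=> ln N - ln (INR q))).
    by rewrite rsum_const_set -/N.
  move=> s sS; have := nfib_gt0 [set v] sS => ?.
  rewrite /z ln_div ?ln_mult //; try lra; exact: Rmult_lt_0_compat.
have := rsum_ln_le0 z_gt0 sum_z => sum_le.
apply: (Rmult_le_reg_l N); first exact: N_gt0.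
by rewrite ent_mulN; lra.
Qed.

End FiberEntropy.

Section FixedPoints.
Variables (q n : nat) (G : rel 'I_n) (f : qmap q n).
Hypothesis IG_f : IG_sub G f.

Lemma depends_arc u v : depends f u v -> G u v.
Proof. by move/forallP: IG_f => /(_ u)/forallP/(_ v)/implyP. Qed.

Lemma map_coord_eq v (a b : config q n) :
  (forall u, G u v -> a u = b u) -> f a v = f b v.
Proof.
move=> ab.
pose mix (k : nat) : config q n := [ffun i : 'I_n => if (i < k)%N then b i else a i].
suff mixE k : f (mix k) v = f a v.
  by rewrite -(mixE n); congr (f _ v); apply/ffunP=> i; rewrite ffunE ltn_ord.
elim: k => [|k <-]; first by congr (f _ v); apply/ffunP=> i; rewrite ffunE.
have [k_lt | k_ge] := ltnP k n; last first.
  congr (f _ v); apply/ffunP=> i; rewrite !ffunE.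
  by have i_lt := leq_trans (ltn_ord i) k_ge; rewrite i_lt ltnW.
pose u := Ordinal k_lt.
have mix_u i : i != u -> mix k.+1 i = mix k i.
  move=> iu; rewrite !ffunE ltnS leq_eqVlt.
  by rewrite -[(i : nat) == k]/(i == u) (negbTE iu).
have [Guv | nGuv] := boolP (G u v).
  congr (f _ v); apply/ffunP=> i; have [-> | /mix_u //] := eqVneq i u.
  by rewrite !ffunE ltnS leqnn ltnn ab.
apply/eqP; apply: contraNT nGuv => neq; apply: depends_arc.
apply/existsP; exists (mix k.+1); apply/existsP; exists (mix k).
by rewrite neq andbT; apply/forallP=> i; apply/implyP=> /mix_u ->.
Qed.

Lemma ent_Fix_parents (Fix_gt0 : (0 < #|Fix f|)%N) v (A : {set 'I_n}) :
  [set u | G u v] \subset A -> ent (Fix f) (v |: A) = ent (Fix f) A.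
Proof.
move=> /subsetP GA; apply: Rle_antisym; last exact/ent_mono/subsetUr.
apply: ent_le_of_agree => // s t; rewrite !inE => /eqP fs /eqP ft /agreeP st.
apply/agreeP=> i /setU1P[-> | /st //].
by rewrite -fs -ft; apply: map_coord_eq => u Guv; apply/st/GA; rewrite inE.
Qed.

End FixedPoints.

(** * Shannon-type upper bounds *)

(* Sets of coordinates are written as sorted lists of vertex numbers.  The
   list operations below are evaluated by [vm_compute] while the facts are
   generated; [@filter nat] keeps the computed lists syntactically identical
   to hand-written ones, so that [lra] sees a single atom for each set. *)
Definition vset n (l : seq nat) : {set 'I_n} := [set i | val i \in l].

Definition vunion n (A B : seq nat) : seq nat :=
  @filter nat (fun k => (k \in A) || (k \in B)) (iota 0 n).

Definition vinter n (A B : seq nat) : seq nat :=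
  @filter nat (fun k => (k \in A) && (k \in B)) (iota 0 n).

Definition vsubsets n : seq (seq nat) :=
  map (fun m => @filter nat (fun k => odd (m %/ 2 ^ k)%N) (iota 0 n))
      (iota 0 (2 ^ n)%N).

Definition vparents n (G : rel 'I_n.+1) v : seq nat :=
  @filter nat (fun k => G (inZp k) v) (iota 0 n.+1).

Section VertexLists.
Variables (q n : nat) (S : {set config q n}).
Hypothesis S_gt0 : (0 < #|S|)%N.

Lemma vsetU A B : vset n (vunion n A B) = vset n A :|: vset n B.
Proof.
by apply/setP=> i; rewrite !inE mem_filter mem_iota leq0n add0n ltn_ord !andbT.
Qed.

Lemma vsetI A B : vset n (vinter n A B) = vset n A :&: vset n B.
Proof.
by apply/setP=> i; rewrite !inE mem_filter mem_iota leq0n add0n ltn_ord !andbT.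
Qed.

Lemma ent_vset_nil : ent S (vset n [::]) = 0.
Proof. by rewrite -(ent_set0 S_gt0); congr ent; apply/setP=> i; rewrite !inE. Qed.

Lemma ent_vset_full l : l = iota 0 n -> ent S (vset n l) = ln (INR #|S|).
Proof.
move=> ->; rewrite -(ent_setT S); congr ent.
by apply/setP=> i; rewrite !inE mem_iota leq0n add0n ltn_ord.
Qed.

Lemma ent_vset1_le (v : 'I_n) l :
  l = [:: val v] -> ent S (vset n l) <= ln (INR q).
Proof.
move=> ->; rewrite (_ : vset n _ = [set v]); first exact: ent_set1_le.
by apply/setP=> i; rewrite !inE.
Qed.

Lemma ent_vset_submod A B C D : C = vunion n A B -> D = vinter n A B ->
  ent S (vset n C) + ent S (vset n D) <= ent S (vset n A) + ent S (vset n B).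
Proof. by move=> -> ->; rewrite vsetU vsetI; apply: ent_submod. Qed.

End VertexLists.

Lemma ent_vset_parents q n (G : rel 'I_n.+1) (f : qmap q n.+1) v P P' :
  IG_sub G f -> (0 < #|Fix f|)%N -> P = vparents G v ->
  P' = vunion n.+1 P [:: val v] ->
  ent (Fix f) (vset n.+1 P') = ent (Fix f) (vset n.+1 P).
Proof.
move=> IG Fix_gt0 -> ->; rewrite vsetU setUC (_ : vset n.+1 [:: _] = [set v]).
  apply: (ent_Fix_parents IG Fix_gt0); apply/subsetP=> u; rewrite !inE => Guv.
  by rewrite mem_filter valZpK Guv mem_iota leq0n add0n ltn_ord.
by apply/setP=> i; rewrite !inE.
Qed.

(* A certificate is the list of pairs (A, B) of vertex sets (vertices are
   numbered from 0) whose submodularity inequality is used; nonnegativity is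
   added for all subsets, and the coordinate and in-neighbour facts for all
   vertices. *)
Ltac add_submod_facts S S_gt0 n L :=
  lazymatch L with
  | (?A, ?B) :: ?L' =>
      let C := eval vm_compute in (vunion n A B) in
      let D := eval vm_compute in (vinter n A B) in
      have := @ent_vset_submod _ n S S_gt0 A B C D erefl erefl;
      add_submod_facts S S_gt0 n L'
  | [::] => idtac
  end.

Ltac add_ge0_facts S_gt0 n L :=
  lazymatch L with
  | ?A :: ?L' => have := ent_ge0 S_gt0 (vset n A); add_ge0_facts S_gt0 n L'
  | [::] => idtac
  end.

Ltac add_vertex_facts IG Fix_gt0 G n vs :=
  lazymatch vs with
  | ?k :: ?vs' =>
      let v := constr:(@Ordinal n k isT) in
      let P := eval vm_compute in (vparents G v) in
      let P' := eval vm_compute in (vunion n P [:: k]) in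
      have := ent_vset_parents IG Fix_gt0 (v := v) (P := P) (P' := P')
                erefl erefl;
      have := @ent_vset1_le _ n _ Fix_gt0 v [:: k] erefl;
      add_vertex_facts IG Fix_gt0 G n vs'
  | [::] => idtac
  end.

Ltac shannon_bound IG Fix_gt0 submods :=
  lazymatch type of IG with
  | is_true (@IG_sub _ ?n ?G ?f) =>
      let S := constr:(Fix f) in
      let vs := eval vm_compute in (iota 0 n) in
      let subsets := eval vm_compute in (vsubsets n) in
      have := @ent_vset_full _ n S vs erefl;
      have := @ent_vset_nil _ n S Fix_gt0;
      add_vertex_facts IG Fix_gt0 G n vs;
      add_ge0_facts Fix_gt0 n subsets;
      add_submod_facts S Fix_gt0 n submods;
      intros; lra
  end.

Lemma Fix_bound_G1 q (f : qmap q 7) : IG_sub G1 f -> (0 < #|Fix f|)%N ->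
  ln (INR #|Fix f|) <= 11/3 * ln (INR q).
Proof.
move=> IG Fix_gt0; shannon_bound IG Fix_gt0
  [:: ([:: 0], [:: 1]); ([:: 0; 1; 3], [:: 1; 2; 3]);
      ([:: 0; 3; 4], [:: 2; 3; 4]); ([:: 0], [:: 3]);
      ([:: 0; 6], [:: 3; 6]); ([:: 0; 4; 5; 6], [:: 3; 4; 5; 6]);
      ([:: 0; 2; 3; 4; 6], [:: 2; 3; 4; 5; 6]); ([:: 0; 1], [:: 1; 6]);
      ([:: 0; 4; 5], [:: 4; 5; 6]); ([:: 0; 2; 3; 4], [:: 2; 3; 4; 6]);
      ([:: 0; 1; 2; 5], [:: 0; 2; 3; 5]); ([:: 0; 1; 4; 5], [:: 0; 3; 4; 5]);
      ([:: 0; 1; 5; 6], [:: 0; 3; 5; 6]); ([:: 1], [:: 4]);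
      ([:: 0; 1; 2; 3; 5; 6], [:: 0; 2; 3; 4; 5; 6]); ([:: 1; 4], [:: 4; 5]);
      ([:: 1], [:: 6]); ([:: 0; 1; 2; 3; 5], [:: 0; 2; 3; 5; 6]);
      ([:: 0; 1; 3; 4; 5], [:: 0; 3; 4; 5; 6]); ([:: 2], [:: 4]);
      ([:: 0; 2; 3; 5; 6], [:: 0; 3; 4; 5; 6]);
      ([:: 0; 1; 2; 3; 5; 6], [:: 0; 1; 3; 4; 5; 6]);
      ([:: 2; 3; 4; 6], [:: 3; 4; 5; 6]); ([:: 0; 1; 2; 3; 6], [:: 0; 1; 3; 5; 6]);
      ([:: 2; 4], [:: 4; 6]); ([:: 0; 1; 2; 3], [:: 0; 1; 3; 6]);
      ([:: 3], [:: 5]); ([:: 0; 3; 4; 6], [:: 0; 4; 5; 6]);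
      ([:: 0; 4; 6], [:: 0; 5; 6]); ([:: 3; 4; 6], [:: 3; 5; 6]);
      ([:: 4], [:: 6]); ([:: 3; 4], [:: 3; 6]);
      ([:: 0; 3; 4], [:: 0; 3; 6])]%N.
Qed.

Lemma Fix_bound_G4 q (f : qmap q 7) : IG_sub G4 f -> (0 < #|Fix f|)%N ->
  ln (INR #|Fix f|) <= 7/2 * ln (INR q).
Proof.
move=> IG Fix_gt0; shannon_bound IG Fix_gt0
  [:: ([:: 0; 6], [:: 2; 6]); ([:: 0; 1; 3; 4; 5; 6], [:: 1; 2; 3; 4; 5; 6]);
      ([:: 0; 1; 2; 6], [:: 1; 2; 3; 6]); ([:: 0; 1; 4; 5], [:: 1; 3; 4; 5]);
      ([:: 0], [:: 6]); ([:: 0; 1; 3; 4; 5], [:: 1; 3; 4; 5; 6]);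
      ([:: 1], [:: 3]); ([:: 1; 2; 4; 6], [:: 2; 3; 4; 6]);
      ([:: 1; 2], [:: 2; 4]); ([:: 0; 1; 2; 3], [:: 0; 2; 3; 4]);
      ([:: 1], [:: 5]); ([:: 0; 1; 2; 4; 6], [:: 0; 2; 4; 5; 6]);
      ([:: 2], [:: 4]); ([:: 0; 2; 3], [:: 0; 3; 4]);
      ([:: 2], [:: 6]); ([:: 1; 2; 3; 5], [:: 1; 3; 5; 6]);
      ([:: 1; 3], [:: 1; 5]); ([:: 0; 1; 2; 3; 4; 6], [:: 0; 1; 2; 4; 5; 6]);
      ([:: 0; 2; 4; 6], [:: 0; 2; 5; 6]); ([:: 1; 2; 3; 4; 6], [:: 1; 2; 3; 5; 6]);
      ([:: 1; 2; 4], [:: 1; 2; 6]); ([:: 0; 1; 2; 3; 4], [:: 0; 1; 2; 3; 6])]%N.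
Qed.

Lemma Fix_bound_G6 q (f : qmap q 7) : IG_sub G6 f -> (0 < #|Fix f|)%N ->
  ln (INR #|Fix f|) <= 7/2 * ln (INR q).
Proof.
move=> IG Fix_gt0; shannon_bound IG Fix_gt0
  [:: ([:: 0; 1; 3; 4; 6], [:: 1; 2; 3; 4; 6]); ([:: 0; 3; 4; 5; 6], [:: 2; 3; 4; 5; 6]);
      ([:: 0], [:: 3]); ([:: 0; 4; 5; 6], [:: 3; 4; 5; 6]);
      ([:: 0; 3; 4], [:: 3; 4; 6]); ([:: 0; 1; 4; 5], [:: 1; 4; 5; 6]);
      ([:: 0; 1; 2; 5; 6], [:: 0; 2; 3; 5; 6]); ([:: 0; 1; 4; 5; 6], [:: 0; 3; 4; 5; 6]);
      ([:: 1; 5; 6], [:: 4; 5; 6]); ([:: 0; 1; 2; 3; 5; 6], [:: 0; 2; 3; 4; 5; 6]);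
      ([:: 1; 6], [:: 5; 6]); ([:: 0; 1; 2], [:: 0; 2; 5]);
      ([:: 1], [:: 6]); ([:: 0; 1; 2; 5], [:: 0; 2; 5; 6]);
      ([:: 2; 5; 6], [:: 4; 5; 6]); ([:: 1; 2; 3; 6], [:: 1; 3; 4; 6]);
      ([:: 2], [:: 5]); ([:: 0; 1; 2; 3; 4; 6], [:: 0; 1; 3; 4; 5; 6]);
      ([:: 0; 3; 4; 6], [:: 0; 4; 5; 6]); ([:: 2; 3; 4; 6], [:: 2; 4; 5; 6]);
      ([:: 3; 4], [:: 4; 6]); ([:: 2; 3; 4], [:: 2; 4; 6]);
      ([:: 4; 6], [:: 5; 6]); ([:: 0; 4; 6], [:: 0; 5; 6]);
      ([:: 4], [:: 6])]%N.
Qed.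

(** * Maps given by local rules *)

Close Scope R_scope.

Definition of_bits (bs : seq bool) : nat := foldr (fun (b : bool) m => b + 2 * m) 0 bs.
Definition bit (m i : nat) : bool := odd (m %/ 2 ^ i).

Lemma ord_in_iota n (i : 'I_n) : (i : nat) \in iota 0 n.
Proof. by rewrite mem_iota add0n ltn_ord. Qed.

Section LocalRules.
Variables (q n : nat).
Variables (nb : 'I_n.+1 -> seq 'I_n.+1) (rule : 'I_n.+1 -> seq 'I_q -> 'I_q).

Definition local_map : qmap q n.+1 :=
  [ffun x : config q n.+1 => [ffun v => rule v [seq x u | u <- nb v]]].

Lemma IG_local_map (G : rel 'I_n.+1) :
  all (fun k => all (G^~ (inZp k)) (nb (inZp k))) (iota 0 n.+1) ->
  IG_sub G local_map.
Proof.
move=> /allP nbG; apply/forallP=> u; apply/forallP=> v; apply/implyP.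
case/existsP=> a /existsP[b /andP[/forall_inP ab]]; rewrite !ffunE.
have := nbG v (ord_in_iota _); rewrite valZpK => /allP /(_ u).
case: (boolP (u \in nb v)) => [_ -> // | u_nb _].
suff -> : [seq a w | w <- nb v] = [seq b w | w <- nb v] by rewrite eqxx.
by apply/eq_in_map=> w w_nb; apply/eqP/ab; apply: contraNneq u_nb => <-.
Qed.

(* Stated over [iota] and [inZp] so that [vm_compute] can decide it:
   enumerating ['I_n] through [enum] does not reduce. *)
Definition local_fixpoint (x : 'I_n.+1 -> 'I_q) : bool :=
  all (fun k => rule (inZp k) [seq x u | u <- nb (inZp k)] == x (inZp k))
      (iota 0 n.+1).

Lemma card_Fix_local_map_ge M (code : nat -> 'I_n.+1 -> 'I_q)
    (ws : seq 'I_n.+1) (decode : seq 'I_q -> nat) :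
  all (fun m => local_fixpoint (code m) && (decode [seq code m u | u <- ws] == m))
      (iota 0 M) ->
  M <= #|Fix local_map|.
Proof.
move=> /allP code_ok; pose x (m : 'I_M) : config q n.+1 := [ffun v => code m v].
have {}code_ok (m : 'I_M) := code_ok m (ord_in_iota m).
have map_x m l : [seq x m u | u <- l] = [seq code m u | u <- l].
  by apply: eq_map => u; rewrite ffunE.
have decK (m : 'I_M) : decode [seq code m u | u <- ws] = m.
  by case/andP: (code_ok m) => _ /eqP.
have x_inj : injective x.
  move=> m m' /(congr1 (fun y : config q n.+1 => decode [seq y u | u <- ws])).
  by rewrite !map_x !decK => /ord_inj.
rewrite -[M]card_ord -(card_imset _ x_inj); apply/subset_leq_card/subsetP.
move=> _ /imsetP[m _ ->]; rewrite inE ffunE; apply/eqP/ffunP=> v.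
case/andP: (code_ok m) => /allP/(_ v (ord_in_iota v)); rewrite valZpK => /eqP fix_v _.
by rewrite !ffunE map_x.
Qed.

End LocalRules.

Definition sym q (bs : seq bool) : 'I_q.+1 := inZp (of_bits bs).

(* Every graph G2, ..., G6 contains the 5-cycle 0 1 2 3 4 and the edge 5 6.
   Over q = 4, each cycle edge {v, v + 1 mod 5} carries one bit e_v known to
   both ends (vertex v stores (e_v, e_(v-1))), and the edge 5 6 carries a
   whole symbol (e_5, e_6): 7 bits in 7 symbols of 2 bits. *)
Definition nb_cycle (v : 'I_7) : seq 'I_7 :=
  map inZp (match val v with
            | 0 => [:: 1; 4] | 1 => [:: 2; 0] | 2 => [:: 3; 1] | 3 => [:: 4; 2]
            | 4 => [:: 0; 3] | 5 => [:: 6] | _ => [:: 5] end).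

Definition rule_cycle (v : 'I_7) (l : seq 'I_4) : 'I_4 :=
  if v < 5 then sym 3 [:: bit (nth ord0 l 0) 1; bit (nth ord0 l 1) 0]
  else nth ord0 l 0.

Definition code_cycle (m : nat) (v : 'I_7) : 'I_4 :=
  if v < 5 then sym 3 [:: bit m v; bit m ((v + 4) %% 5)]
  else sym 3 [:: bit m 5; bit m 6].

Definition decode_cycle (l : seq 'I_4) : nat :=
  of_bits [:: bit (nth ord0 l 0) 0; bit (nth ord0 l 1) 0; bit (nth ord0 l 2) 0;
              bit (nth ord0 l 3) 0; bit (nth ord0 l 4) 0; bit (nth ord0 l 5) 0;
              bit (nth ord0 l 5) 1].

Lemma IG_cycle : IG_sub (graph_of base_edges) (local_map nb_cycle rule_cycle).
Proof. by apply: IG_local_map; vm_compute. Qed.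

Lemma card_Fix_cycle : 2 ^ 7 <= #|Fix (local_map nb_cycle rule_cycle)|.
Proof.
apply: (card_Fix_local_map_ge (code := code_cycle) (ws := map inZp (iota 0 6))
                              (decode := decode_cycle)).
by vm_compute.
Qed.

(* Over q = 8: each vertex stores three of the bits e_0, ..., e_10 and
   e_0 + e_1, and recovers them from its neighbours: 11 bits in 7 symbols of
   3 bits. *)
Definition nb_G1 (v : 'I_7) : seq 'I_7 :=
  map inZp (match val v with
            | 0 => [:: 1; 5; 4] | 1 => [:: 0; 5; 2] | 2 => [:: 1; 3]
            | 3 => [:: 2; 4; 6] | 4 => [:: 3; 0] | 5 => [:: 0; 1; 6]
            | _ => [:: 5; 3] end).

Definition rule_G1 (v : 'I_7) (l : seq 'I_8) : 'I_8 :=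
  let b i j := bit (nth ord0 l i) j in
  sym 7 (match val v with
         | 0 => [:: b 0 0 (+) b 1 0; b 2 1; b 2 2]
         | 1 => [:: b 0 0 (+) b 1 0; b 2 0; b 2 1]
         | 2 => [:: b 0 1; b 0 2; b 1 0]
         | 3 => [:: b 0 2; b 1 0; b 2 2]
         | 4 => [:: b 0 1; b 1 1; b 1 2]
         | 5 => [:: b 0 0 (+) b 1 0; b 2 0; b 2 1]
         | _ => [:: b 0 1; b 0 2; b 1 2] end).

Definition code_G1 (m : nat) (v : 'I_7) : 'I_8 :=
  let e := bit m in
  sym 7 (match val v with
         | 0 => [:: e 0; e 2; e 3]
         | 1 => [:: e 1; e 4; e 5]
         | 2 => [:: e 4; e 5; e 8]
         | 3 => [:: e 8; e 9; e 10]
         | 4 => [:: e 9; e 2; e 3]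
         | 5 => [:: e 0 (+) e 1; e 6; e 7]
         | _ => [:: e 6; e 7; e 10] end).

Definition decode_G1 (l : seq 'I_8) : nat :=
  let b i j := bit (nth ord0 l i) j in
  of_bits [:: b 0 0; b 1 0; b 0 1; b 0 2; b 1 1; b 1 2;
              b 2 1; b 2 2; b 3 0; b 3 1; b 3 2].

Lemma IG_G1 : IG_sub G1 (local_map nb_G1 rule_G1).
Proof. by apply: IG_local_map; vm_compute. Qed.

Lemma card_Fix_G1 : 2 ^ 11 <= #|Fix (local_map nb_G1 rule_G1)|.
Proof.
apply: (card_Fix_local_map_ge (code := code_G1) (ws := map inZp [:: 0; 1; 5; 3])
                              (decode := decode_G1)).
by vm_compute.
Qed.

(** * Guessing numbers and entropy *)

Open Scope R_scope.

Lemma IG_sub_mono n (G G' : rel 'I_n) q (f : qmap q n) :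
  (forall u v, G u v -> G' u v) -> IG_sub G f -> IG_sub G' f.
Proof.
move=> GG' /forallP IG; apply/forallP=> u; apply/forallP=> v; apply/implyP=> d.
by apply: GG'; move/forallP: (IG u) => /(_ v)/implyP; apply.
Qed.

Lemma graph_of_sub n (E E' : seq (nat * nat)) (u v : 'I_n) :
  {subset E <= E'} -> graph_of E u v -> graph_of E' u v.
Proof. by move=> EE' /orP[/EE' | /EE'] e; rewrite /graph_of e ?orbT. Qed.

Lemma bigRmax_ge (I : eqType) (r : seq I) (P : pred I) (F : I -> R) i :
  i \in r -> P i -> F i <= \big[Rmax/0]_(j <- r | P j) F j.
Proof.
elim: r => [//|j r IH]; rewrite inE big_cons => /predU1P[<- -> | i_r Pi].
  exact: Rmax_l.
by case: (P j); [apply: Rle_trans (Rmax_r _ _) | idtac]; apply: IH.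
Qed.

Lemma gn_ge n (G : rel 'I_n) q (f : qmap q n) :
  IG_sub G f -> ln (INR #|Fix f|) / ln (INR q) <= gn G q.
Proof.
move=> IG; rewrite /gn.
exact: (@bigRmax_ge _ _ _ (fun f => ln (INR #|Fix f|) / ln (INR q)) f
          (mem_index_enum f) IG).
Qed.

Lemma gn_le n (G : rel 'I_n) q c : 0 <= c -> (2 <= q)%N ->
  (forall f : qmap q n, IG_sub G f -> (0 < #|Fix f|)%N ->
     ln (INR #|Fix f|) <= c * ln (INR q)) ->
  gn G q <= c.
Proof.
move=> c_ge0 q_ge2 Fix_bound.
have lnq_gt0 : 0 < ln (INR q).
  by rewrite -ln_1; apply: ln_increasing; [lra | apply: (lt_INR 1); apply/ltP].
apply: (big_ind (fun x => x <= c)) => // [x y | f IG]; first exact: Rmax_lub.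
have [Fix0 | Fix_gt0] := posnP #|Fix f|.
  (* Stdlib's [ln] is [0] on nonpositive arguments. *)
  rewrite Fix0 /ln; case: Rlt_dec => [/Rlt_irrefl // | _].
  by rewrite /Rdiv Rmult_0_l.
apply: (Rmult_le_reg_r (ln (INR q))) => //.
by rewrite /Rdiv Rmult_assoc Rinv_l; [rewrite Rmult_1_r; apply: Fix_bound | lra].
Qed.

Lemma ln_pow2 k : ln (INR (2 ^ k)) = INR k * ln 2.
Proof.
rewrite -ln_pow; last lra.
by congr ln; elim: k => [//|k IH]; rewrite expnS mult_INR IH /=; lra.
Qed.

Lemma entropy_is_of_bounds n (G : rel 'I_n) c (k a : nat) (f0 : qmap (2 ^ a) n) :
  (0 < a)%N -> c * INR a = INR k -> IG_sub G f0 -> (2 ^ k <= #|Fix f0|)%N ->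
  (forall q (f : qmap q n), IG_sub G f -> (0 < #|Fix f|)%N ->
     ln (INR #|Fix f|) <= c * ln (INR q)) ->
  entropy_is G c.
Proof.
move=> a_gt0 ca_k IG0 Fix0 Fix_bound.
have a_pos : 0 < INR a by apply: INR_gt0.
have c_ge0 : 0 <= c.
  apply: (Rmult_le_reg_r (INR a)) => //; rewrite ca_k Rmult_0_l; exact: pos_INR.
split=> [r [q [q_ge2 ->]] | b b_ub]; first exact: gn_le c_ge0 q_ge2 (Fix_bound q).
apply: Rle_trans (b_ub _ (ex_intro _ (2 ^ a)%N (conj _ erefl))); last first.
  by rewrite -[2%N]expn1 leq_exp2l.
apply: Rle_trans (gn_ge IG0); rewrite ln_pow2.
have ln2_gt0 : 0 < ln 2 by rewrite -ln_1; apply: ln_increasing; lra.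
have lnFix_ge : c * (INR a * ln 2) <= ln (INR #|Fix f0|).
  rewrite -Rmult_assoc ca_k -ln_pow2.
  by apply: ln_le; [apply/INR_gt0; rewrite expn_gt0 | apply/le_INR/leP].
apply: (Rmult_le_reg_r (INR a * ln 2)); first exact: Rmult_lt_0_compat.
rewrite /Rdiv Rmult_assoc Rinv_l ?Rmult_1_r //.
by apply: Rgt_not_eq; apply: Rmult_lt_0_compat.
Qed.

Lemma entropy_is_7_2 (E : seq (nat * nat)) :
  (forall q (f : qmap q 7), IG_sub (graph_of (base_edges ++ E)) f ->
     (0 < #|Fix f|)%N -> ln (INR #|Fix f|) <= 7/2 * ln (INR q)) ->
  entropy_is (@graph_of 7 (base_edges ++ E)) (7/2).
Proof.
move=> Fix_bound.
apply: (@entropy_is_of_bounds _ _ _ 7 2 (local_map nb_cycle rule_cycle)).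
- by [].
- by rewrite /=; lra.
- apply: IG_sub_mono IG_cycle => u v; apply: graph_of_sub => e e_in.
  by rewrite mem_cat e_in.
- exact: card_Fix_cycle.
- exact: Fix_bound.
Qed.

Theorem mainTheorem5 :
  entropy_is G1 (11 / 3) /\
  entropy_is G2 (7 / 2) /\ entropy_is G3 (7 / 2) /\
  entropy_is G4 (7 / 2) /\ entropy_is G5 (7 / 2) /\
  entropy_is G6 (7 / 2).
Proof.
have bound_G4 (E : seq (nat * nat)) q (f : qmap q 7) :
    {subset E <= [:: (6, 1); (6, 3); (7, 2); (7, 4)]%N} ->
    IG_sub (graph_of (base_edges ++ E)) f -> (0 < #|Fix f|)%N ->
    ln (INR #|Fix f|) <= 7/2 * ln (INR q).
  move=> E_sub IG; apply: Fix_bound_G4; apply: IG_sub_mono IG => u v.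
  apply: graph_of_sub => e; rewrite !mem_cat.
  by case/orP=> [-> | /E_sub ->]; rewrite ?orbT.
split.
  apply: (@entropy_is_of_bounds _ _ _ 11 3 (local_map nb_G1 rule_G1)) => //.
  - by rewrite /=; lra.
  - exact: IG_G1.
  - exact: card_Fix_G1.
  - exact: Fix_bound_G1.
rewrite /G2 /G3 /G4 /G5 /G6; split; last split; last split; last split.
1-4: by apply: entropy_is_7_2 => q f; apply: bound_G4; apply/allP.
by apply: entropy_is_7_2; exact: Fix_bound_G6.
Qed.
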